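(* Let $S_j$ be local potentials satisfying (A)–(E) and let $K\subset\mathbb{R}^d$ be compact. There is, for every $n\in\mathbb{N}$, a constant $\delta_n>0$ depending only on $K$, $n$ (and the potentials) such that the following holds: if $x<y$ are two Birkhoff configurations with rotation vectors in $K$ that are both stationary, then for all $i,k\in\mathbb{Z}^d$, $$y_k-x_k\le\delta_{\|i-k\|}\,(y_i-x_i).$$ In particular, $x<y$ implies $x\ll y$.
   Context: Notation: $\|i\|=\sum_{k=1}^d|i_k|$, $B_j^r=\{k:\|k-j\|\le r\}$, $(\tau_{k,l}x)_i=x_{i+k}+l$. Local potentials $S_j:\mathbb{R}^{\mathbb{Z}^d}\to\mathbb{R}$, $j\in\mathbb{Z}^d$, satisfy: (A) there is $r\in(0,\infty)$ and $C^2$ functions $s_j:\mathbb{R}^{B_j^r}\to\mathbb{R}$ with $S_j(x)=s_j(x|_{B_j^r})$; (B) $S_j(\tau_{k,l}x)=S_{j+k}(x)$; (C) each $S_j$ is bounded below and $S_j(x)\to\infty$ as $|x_k-x_j|\to\infty$ whenever $\|k-j\|=1$; (D) $\partial_{i,k}S_j\le0$ for $i\ne k$, and $\partial_{i,k}S_i<0$ when $\|i-k\|=1$; (E) $|\partial_{i,k}S_j|\le C$ uniformly. Order: $x\le y$ iff $x_i\le y_i$ for all $i$; $x<y$ iff $x\le y$, $x\ne y$; $x\ll y$ iff $x_i<y_i$ for all $i$. Birkhoff: for every $(k,l)$, $\tau_{k,l}x\ge x$ or $\tau_{k,l}x\le x$. Rotation vector $\omega$: $\lim_n x_{ni}/n=\langle\omega,i\rangle$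 for all $i$. A configuration $x$ is stationary if $\sum_{\|j-i\|\le r}\partial_iS_j(x)=0$ for all $i\in\mathbb{Z}^d$. *)

From Stdlib Require Import Reals ZArith List.
From Stdlib Require Vector VectorEq.
Open Scope R_scope.

Definition Pt (d : nat) : Type := Vector.t Z d.
Definition Config (d : nat) : Type := Pt d -> R.

Definition pt_eq_dec {d : nat} (u v : Pt d) : {u = v} + {u <> v} :=
  VectorEq.eq_dec Z Z.eqb Z.eqb_eq d u v.

Definition padd {d : nat} (u v : Pt d) : Pt d := Vector.map2 Z.add u v.
Definition psub {d : nat} (u v : Pt d) : Pt d := Vector.map2 Z.sub u v.
Definition pscale {d : nat} (n : nat) (u : Pt d) : Pt d :=
  Vector.map (Z.mul (Z.of_nat n)) u.

Definition norm1 {d : nat} (u : Pt d) : Z :=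
  Vector.fold_right (fun a s => (Z.abs a + s)%Z) u 0%Z.

Definition inBall {d : nat} (r : R) (j k : Pt d) : Prop :=
  IZR (norm1 (psub k j)) <= r.

Definition dotRZ {d : nat} (w : Vector.t R d) (i : Pt d) : R :=
  Vector.fold_right (fun a s => a + s) (Vector.map2 (fun a b => a * IZR b) w i) 0.

Definition tau {d : nat} (k : Pt d) (l : Z) (x : Config d) : Config d :=
  fun i => x (padd i k) + IZR l.

Definition upd {d : nat} (x : Config d) (i : Pt d) (t : R) : Config d :=
  fun k => if pt_eq_dec k i then x k + t else x k.

Definition IsPartial {d : nat} (F : Config d -> R) (i : Pt d) (DF : Config d -> R) : Prop :=
  forall x, derivable_pt_lim (fun t => F (upd x i t)) 0 (DF x).

Definition LocalTo {d : nat} (r : R) (j : Pt d) (F : Config d -> R) : Prop :=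
  forall x y : Config d, (forall k, inBall r j k -> x k = y k) -> F x = F y.

Definition ContLocal {d : nat} (r : R) (j : Pt d) (F : Config d -> R) : Prop :=
  forall x eps, 0 < eps -> exists delta, 0 < delta /\
    forall y : Config d, (forall k, inBall r j k -> Rabs (y k - x k) < delta) ->
      Rabs (F y - F x) < eps.

(** Standing assumptions (A)-(E) on the local potentials S_j.
    dS j i = d_i S_j,  ddS j i k = d_k d_i S_j  (= d_{i,k} S_j). *)
Definition LocalPotentials {d : nat} (r : R) (S : Pt d -> Config d -> R)
    (dS : Pt d -> Pt d -> Config d -> R) (ddS : Pt d -> Pt d -> Pt d -> Config d -> R) : Prop :=
  (* (A) *)
  0 < r /\
  (forall j, LocalTo r j (S j)) /\
  (forall j i, IsPartial (S j) i (dS j i)) /\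
  (forall j i k, IsPartial (dS j i) k (ddS j i k)) /\
  (forall j i k, ContLocal r j (ddS j i k)) /\
  (* (B) *)
  (forall j k l x, S j (tau k l x) = S (padd j k) x) /\
  (* (C) *)
  (forall j, exists m, forall x, m <= S j x) /\
  (forall j k, norm1 (psub k j) = 1%Z ->
     forall M, exists Rad, forall x, Rad < Rabs (x k - x j) -> M < S j x) /\
  (* (D) *)
  (forall j i k x, i <> k -> ddS j i k x <= 0) /\
  (forall i k x, norm1 (psub i k) = 1%Z -> ddS i i k x < 0) /\
  (* (E) *)
  (exists C, forall j i k x, Rabs (ddS j i k x) <= C).

Definition cle {d : nat} (x y : Config d) : Prop := forall i, x i <= y i.
Definition clt {d : nat} (x y : Config d) : Prop := cle x y /\ x <> y.
Definition cll {d : nat} (x y : Config d) : Prop := forall i, x i < y i.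

Definition Birkhoff {d : nat} (x : Config d) : Prop :=
  forall k l, cle x (tau k l x) \/ cle (tau k l x) x.

Definition RotationVector {d : nat} (x : Config d) (w : Vector.t R d) : Prop :=
  forall i, Un_cv (fun n => x (pscale n i) / INR n) (dotRZ w i).

(** sum_{||j - i|| <= r} d_i S_j (x) = 0 for all i; the finite sum is taken over
    any duplicate-free enumeration L of the ball B_i^r. *)
Definition Stationary {d : nat} (r : R) (dS : Pt d -> Pt d -> Config d -> R) (x : Config d) : Prop :=
  forall i (L : list (Pt d)), NoDup L -> (forall j, In j L <-> inBall r i j) ->
    fold_right Rplus 0 (map (fun j => dS j i x) L) = 0.

Definition OpenRd {d : nat} (U : Vector.t R d -> Prop) : Prop :=
  forall w, U w -> exists e, 0 < e /\
    forall v, (forall m : Fin.t d, Rabs (Vector.nth v m - Vector.nth w m) < e) -> U v.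

Definition CompactRd {d : nat} (K : Vector.t R d -> Prop) : Prop :=
  forall (I : Type) (U : I -> Vector.t R d -> Prop),
    (forall a, OpenRd (U a)) ->
    (forall w, K w -> exists a, U a w) ->
    exists F : list I, forall w, K w -> exists a, In a F /\ U a w.

(** - Birkhoff configurations with rotation vector [w] satisfy
      [|x_{q+m} - x_q - <w,m>| <= 1]; as [K] is bounded, the oscillation of
      [x] and [y] on every interaction ball [B_i^r] is bounded by a constant [B].
    - By translation invariance (B) and continuity of the second derivatives,
      the strict inequality [d_{i,k} S_i < 0] for neighbours (D) becomes a
      uniform bound [<= -c] on configurations of oscillation [<= B + 1]
      (Bolzano-Weierstrass on a bounded box of finitely many coordinates).
    - Subtracting the stationarity equations at [i] for [x] and [y] and
      expanding [d_i S_j y - d_i S_j x] by the mean value theorem along a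
      finely subdivided monotone path from [x] to [y] (fine enough that the
      intermediate configurations keep oscillation [<= B + 1]) yields the
      neighbour estimate [c (y_k - x_k) <= #B_0^r * C * (y_i - x_i)].
    - Chaining this along a lattice path of length [||i-k||] gives the
      theorem with [delta_n = D^n]; in particular [x_i = y_i] forces [x = y]. *)

From Stdlib Require Import Reals ZArith List Lra Lia FinFun.
From Stdlib Require Vector.
From Stdlib Require Import Classical ClassicalEpsilon FunctionalExtensionality.
Open Scope R_scope.

Section Lattice.
Context {d : nat}.

Definition origin : Pt d := Vector.const 0%Z d.

Ltac vext := apply Vector.eq_nth_iff; intros p ? <-;
  repeat first [rewrite (Vector.nth_map2 _ _ _ p p p eq_refl eq_refl)
    | rewrite (Vector.nth_map _ _ p p eq_refl) | rewrite Vector.const_nth]; lia.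

Lemma psub_padd_l (i u : Pt d) : psub (padd i u) i = u.
Proof. unfold psub, padd; vext. Qed.
Lemma padd_psub_l (i j : Pt d) : padd i (psub j i) = j.
Proof. unfold psub, padd; vext. Qed.
Lemma psub_padd_r (q i : Pt d) : psub (padd q i) i = q.
Proof. unfold psub, padd; vext. Qed.
Lemma padd_psub_r (m i : Pt d) : padd (psub m i) i = m.
Proof. unfold psub, padd; vext. Qed.
Lemma padd_origin_l (i : Pt d) : padd origin i = i.
Proof. unfold origin, padd; vext. Qed.
Lemma psub_origin_r (i : Pt d) : psub i origin = i.
Proof. unfold origin, psub; vext. Qed.
Lemma psub_diag (i : Pt d) : psub i i = origin.
Proof. unfold origin, psub; vext. Qed.
Lemma psub_origin_psub (i k : Pt d) : psub origin (psub k i) = psub i k.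
Proof. unfold origin, psub; vext. Qed.
Lemma pscale_S (n : nat) (m : Pt d) : pscale (S n) m = padd (pscale n m) m.
Proof. unfold pscale, padd; vext. Qed.

End Lattice.

Lemma norm1_cons {n} (h : Z) (v : Pt n) :
  norm1 (Vector.cons Z h n v) = (Z.abs h + norm1 v)%Z.
Proof. reflexivity. Qed.

Lemma norm1_nonneg {d} (v : Pt d) : (0 <= norm1 v)%Z.
Proof. induction v; [cbn; lia | rewrite norm1_cons; lia]. Qed.

Lemma norm1_triangle {d} (a b c : Pt d) :
  (norm1 (psub a c) <= norm1 (psub a b) + norm1 (psub b c))%Z.
Proof.
  revert b c; induction a as [|h n a IH]; intros b c.
  - pattern b; apply Vector.case0; pattern c; apply Vector.case0; cbn; lia.
  - rewrite (Vector.eta b), (Vector.eta c); unfold psub in *; simpl.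
    rewrite !norm1_cons. specialize (IH (Vector.tl b) (Vector.tl c)). lia.
Qed.

Lemma norm1_sym {d} (a b : Pt d) : norm1 (psub a b) = norm1 (psub b a).
Proof.
  revert b; induction a as [|h n a IH]; intros b.
  - pattern b; apply Vector.case0; reflexivity.
  - rewrite (Vector.eta b); unfold psub in *; simpl.
    rewrite !norm1_cons, IH. f_equal. lia.
Qed.

Lemma norm1_diag {d} (a : Pt d) : norm1 (psub a a) = 0%Z.
Proof. induction a; [reflexivity|]. unfold psub in *; simpl; rewrite norm1_cons, IHa. lia. Qed.

Lemma norm1_zero_eq {d} (a b : Pt d) : norm1 (psub a b) = 0%Z -> a = b.
Proof.
  revert b; induction a as [|h n a IH]; intros b.
  - pattern b; apply Vector.case0; reflexivity.
  - rewrite (Vector.eta b). generalize (Vector.hd b) (Vector.tl b); clear b; intros hb b.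
    unfold psub in *; simpl. rewrite norm1_cons. intro H.
    pose proof (norm1_nonneg (Vector.map2 Z.sub a b)).
    assert (h = hb) by lia. subst. f_equal. apply IH. lia.
Qed.

Lemma norm1_step {d} (i k : Pt d) (n : nat) : norm1 (psub i k) = Z.of_nat (S n) ->
  exists i', norm1 (psub i i') = 1%Z /\ norm1 (psub i' k) = Z.of_nat n.
Proof.
  revert k n. induction i as [|h m i IH]; intros k n.
  - pattern k; apply Vector.case0; cbn; lia.
  - rewrite (Vector.eta k). generalize (Vector.hd k) (Vector.tl k); clear k; intros hk k.
    unfold psub in *; simpl. rewrite !norm1_cons. intro H.
    pose proof (norm1_nonneg (Vector.map2 Z.sub i k)).
    destruct (Z.eq_dec h hk) as [->|Hne].
    + rewrite Z.sub_diag in H; simpl in H. destruct (IH k n H) as [i' [H1 H2]].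
      exists (Vector.cons Z hk m i'). simpl; rewrite !norm1_cons, Z.sub_diag. simpl. lia.
    + exists (Vector.cons Z (h - Z.sgn (h - hk))%Z m i). simpl; rewrite !norm1_cons.
      pose proof (norm1_diag i) as Hd. unfold psub in Hd. rewrite Hd.
      destruct (Z.lt_total h hk) as [Hl|[Hl|Hl]]; [|lia|].
      * rewrite (Z.sgn_neg (h - hk)) by lia. lia.
      * rewrite (Z.sgn_pos (h - hk)) by lia. lia.
Qed.

Lemma inBall_compose {d} (r : R) (i j q : Pt d) :
  inBall r i j -> inBall r j q -> inBall (2 * r + 1) i q.
Proof.
  unfold inBall; intros H1 H2.
  pose proof (norm1_triangle q j i) as Ht. apply IZR_le in Ht. rewrite plus_IZR in Ht. lra.
Qed.

Definition zrange (M : nat) : list Z :=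
  map (fun n => (Z.of_nat n - Z.of_nat M)%Z) (seq 0 (2 * M + 1)).

Lemma zrange_complete (M : nat) (a : Z) : (Z.abs a <= Z.of_nat M)%Z -> In a (zrange M).
Proof.
  intro H. unfold zrange. apply in_map_iff.
  exists (Z.to_nat (a + Z.of_nat M)). split.
  - rewrite Z2Nat.id; lia.
  - apply in_seq. lia.
Qed.

Fixpoint box (d : nat) (M : nat) : list (Pt d) :=
  match d with
  | O => Vector.nil Z :: nil
  | S d' => flat_map (fun a => map (fun v => Vector.cons Z a d' v) (box d' M)) (zrange M)
  end.

Lemma box_complete (d M : nat) (v : Pt d) : (norm1 v <= Z.of_nat M)%Z -> In v (box d M).
Proof.
  induction v as [|h n v IH]; [left; reflexivity|].
  rewrite norm1_cons. intro H. pose proof (norm1_nonneg v). simpl.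
  apply in_flat_map. exists h. split; [apply zrange_complete; lia | apply in_map, IH; lia].
Qed.

Definition ball_offsets {d : nat} (rad : R) : list (Pt d) :=
  nodup pt_eq_dec
   (filter (fun u => if Rle_dec (IZR (norm1 u)) rad then true else false)
      (box d (Z.to_nat (up rad)))).

Definition ball_enum {d : nat} (rad : R) (i : Pt d) : list (Pt d) :=
  map (padd i) (ball_offsets rad).

Lemma ball_enum_nodup {d} rad (i : Pt d) : NoDup (ball_enum rad i).
Proof.
  apply Injective_map_NoDup; [|apply NoDup_nodup].
  intros u v H. rewrite <- (psub_padd_l i u), <- (psub_padd_l i v), H. reflexivity.
Qed.

Lemma ball_enum_spec {d} rad (i j : Pt d) : In j (ball_enum rad i) <-> inBall rad i j.
Proof.
  unfold ball_enum, ball_offsets, inBall. split.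
  - intro H. apply in_map_iff in H. destruct H as [u [<- Hu]].
    apply nodup_In, filter_In in Hu. destruct Hu as [_ Hu].
    rewrite psub_padd_l. destruct (Rle_dec _ _); [assumption | discriminate].
  - intro H. apply in_map_iff. exists (psub j i). split; [apply padd_psub_l|].
    apply nodup_In, filter_In. split.
    + apply box_complete. destruct (archimed rad) as [H1 _].
      assert (H2 : IZR (norm1 (psub j i)) < IZR (up rad)) by lra.
      apply lt_IZR in H2. pose proof (norm1_nonneg (psub j i)). rewrite Z2Nat.id; lia.
    + destruct (Rle_dec _ _); [reflexivity | contradiction].
Qed.

Lemma ball_enum_length {d} rad (i i' : Pt d) :
  length (ball_enum rad i) = length (ball_enum rad i').
Proof. unfold ball_enum. rewrite !length_map. reflexivity. Qed.

Definition lsum {A : Type} (f : A -> R) (L : list A) : R := fold_right Rplus 0 (map f L).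

Lemma lsum_plus {A} (f g : A -> R) L : lsum (fun a => f a + g a) L = lsum f L + lsum g L.
Proof. induction L; unfold lsum in *; simpl; [lra|]. rewrite IHL. lra. Qed.
Lemma lsum_minus {A} (f g : A -> R) L : lsum (fun a => f a - g a) L = lsum f L - lsum g L.
Proof. induction L; unfold lsum in *; simpl; [lra|]. rewrite IHL. lra. Qed.
Lemma lsum_scal {A} (c : R) (f : A -> R) L : lsum (fun a => c * f a) L = c * lsum f L.
Proof. induction L; unfold lsum in *; simpl; [lra|]. rewrite IHL. lra. Qed.
Lemma lsum_const {A} (c : R) (L : list A) : lsum (fun _ => c) L = INR (length L) * c.
Proof.
  induction L; unfold lsum in *; cbn [map fold_right length]; [simpl; lra|].
  rewrite IHL, S_INR. lra.
Qed.
Lemma lsum_le {A} (f g : A -> R) L : (forall a, In a L -> f a <= g a) -> lsum f L <= lsum g L.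
Proof.
  induction L; unfold lsum in *; simpl; intros H; [lra|].
  pose proof (H a (or_introl eq_refl)). pose proof (IHL (fun b Hb => H b (or_intror Hb))). lra.
Qed.
Lemma lsum_ext {A} (f g : A -> R) L : (forall a, In a L -> f a = g a) -> lsum f L = lsum g L.
Proof. intro H. apply Rle_antisym; apply lsum_le; intros a Ha; rewrite (H a Ha); lra. Qed.

Lemma lsum_indicator_out {d} (a : Pt d) (v : R) L : ~ In a L ->
  lsum (fun m => if pt_eq_dec m a then v else 0) L = 0.
Proof.
  induction L as [|b L IH]; intros Hi; unfold lsum in *; simpl; [reflexivity|].
  destruct (pt_eq_dec b a) as [->|]; [exfalso; apply Hi; left; auto|].
  rewrite IH; [lra | intro; apply Hi; right; auto].
Qed.
Lemma lsum_indicator {d} (a : Pt d) (v : R) L : NoDup L -> In a L ->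
  lsum (fun m => if pt_eq_dec m a then v else 0) L = v.
Proof.
  induction L as [|b L IH]; intros Hn Hi; [destruct Hi|]. inversion Hn; subst.
  pose proof (lsum_indicator_out a v L) as H0.
  unfold lsum in *; simpl. destruct Hi as [->|Hi].
  - destruct (pt_eq_dec a a) as [_|]; [|congruence]. rewrite H0; auto. lra.
  - destruct (pt_eq_dec b a) as [->|]; [contradiction|]. rewrite IH; auto. lra.
Qed.

(** ** Mean value theorems along coordinates *)

Lemma rabs_le_inv (a b : R) : Rabs a <= b -> -b <= a <= b.
Proof. unfold Rabs; destruct (Rcase_abs a); lra. Qed.

Lemma Rdiv_le_0_compat (a b : R) : 0 <= a -> 0 < b -> 0 <= a / b.
Proof. intros. unfold Rdiv. apply Rmult_le_pos; [lra | left; apply Rinv_0_lt_compat; lra]. Qed.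

Lemma convex_bound (t a b B : R) : 0 <= t <= 1 -> Rabs a <= B -> Rabs b <= B ->
  Rabs ((1 - t) * a + t * b) <= B.
Proof. intros Ht Ha Hb. apply rabs_le_inv in Ha, Hb. apply Rabs_le. split; nra. Qed.

Lemma deriv_shift (f : R -> R) (t0 l : R) :
  derivable_pt_lim (fun s => f (t0 + s)) 0 l -> derivable_pt_lim f t0 l.
Proof.
  intros H eps He. destruct (H eps He) as [del Hd]. exists del. intros h Hh Hh2.
  specialize (Hd h Hh Hh2). rewrite !Rplus_0_l, Rplus_0_r in Hd. exact Hd.
Qed.

Section Calculus.
Context {d : nat}.

Lemma upd_upd (x : Config d) a s t : upd (upd x a s) a t = upd x a (s + t).
Proof. apply functional_extensionality; intro q; unfold upd. destruct (pt_eq_dec q a); lra. Qed.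

Lemma upd_0 (x : Config d) a : upd x a 0 = x.
Proof. apply functional_extensionality; intro q; unfold upd. destruct (pt_eq_dec q a); lra. Qed.

Lemma partial_everywhere (G : Config d -> R) a dG : IsPartial G a dG ->
  forall h t0, derivable_pt_lim (fun t => G (upd h a t)) t0 (dG (upd h a t0)).
Proof.
  intros HP h t0. apply deriv_shift. specialize (HP (upd h a t0)).
  replace (fun s => G (upd h a (t0 + s))) with (fun t => G (upd (upd h a t0) a t)); [exact HP|].
  apply functional_extensionality; intro s. rewrite upd_upd. reflexivity.
Qed.

Lemma mvt_coordinate (G : Config d -> R) a dG : IsPartial G a dG ->
  forall h del, 0 <= del -> exists th, 0 <= th <= del /\
    G (upd h a del) - G h = dG (upd h a th) * del.
Proof.
  intros HP h del Hd. destruct (Req_dec del 0) as [->|Hne].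
  - exists 0. rewrite upd_0. split; [lra | ring].
  - destruct (MVT_cor2 (fun t => G (upd h a t)) (fun t => dG (upd h a t)) 0 del)
      as [c [Hc1 Hc2]]; [lra | intros c _; apply partial_everywhere, HP |].
    exists c. split; [lra|]. simpl in Hc1. rewrite upd_0 in Hc1. rewrite Hc1. ring.
Qed.

Lemma partial_local rad j (G : Config d -> R) i DG :
  LocalTo rad j G -> IsPartial G i DG -> LocalTo rad j DG.
Proof.
  intros HL HP x y Hxy. apply (uniqueness_limite (fun t => G (upd x i t)) 0); [apply HP|].
  replace (fun t => G (upd x i t)) with (fun t => G (upd y i t)); [apply HP|].
  apply functional_extensionality; intro t. symmetry. apply HL. intros k Hk. unfold upd.
  rewrite (Hxy k Hk). reflexivity.
Qed.

Lemma tau_upd (c : Pt d) l (x : Config d) m t :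
  tau c l (upd x m t) = upd (tau c l x) (psub m c) t.
Proof.
  apply functional_extensionality; intro q; unfold tau, upd.
  destruct (pt_eq_dec (padd q c) m) as [H|H]; destruct (pt_eq_dec q (psub m c)) as [H'|H'].
  - lra.
  - exfalso. apply H'. rewrite <- H. symmetry. apply psub_padd_r.
  - exfalso. apply H. rewrite H'. apply padd_psub_r.
  - lra.
Qed.

Lemma partial_tau (F G : Config d -> R) c l m DF DG :
  (forall x, F x = G (tau c l x)) -> IsPartial G (psub m c) DG -> IsPartial F m DF ->
  forall x, DF x = DG (tau c l x).
Proof.
  intros HFG HG HF x. apply (uniqueness_limite (fun t => F (upd x m t)) 0); [apply HF|].
  replace (fun t => F (upd x m t)) with (fun t => G (upd (tau c l x) (psub m c) t)); [apply HG|].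
  apply functional_extensionality; intro t. rewrite HFG, tau_upd. reflexivity.
Qed.

Definition hybrid (L : list (Pt d)) (z z' : Config d) : Config d :=
  fun q => if in_dec pt_eq_dec q L then z' q else z q.

Lemma hybrid_nil z z' : hybrid nil z z' = z.
Proof. reflexivity. Qed.

Lemma hybrid_cons a L z z' : ~ In a L ->
  hybrid (a :: L) z z' = upd (hybrid L z z') a (z' a - z a).
Proof.
  intro Ha. apply functional_extensionality; intro q. unfold hybrid, upd.
  destruct (pt_eq_dec q a) as [->|Hq].
  - destruct (in_dec pt_eq_dec a (a :: L)) as [_|H]; [|exfalso; apply H; left; auto].
    destruct (in_dec pt_eq_dec a L); [contradiction | ring].
  - destruct (in_dec pt_eq_dec q (a :: L)) as [[->|H]|H];
      destruct (in_dec pt_eq_dec q L); try congruence; try tauto.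
    exfalso; apply H; right; auto.
Qed.

Lemma mvt_hybrid (G : Config d -> R) (dG : Pt d -> Config d -> R)
  (HP : forall m, IsPartial G m (dG m)) (L : list (Pt d)) (z z' : Config d) (W : Pt d -> R) :
  NoDup L -> cle z z' ->
  (forall m xi, In m L -> cle z xi -> cle xi z' -> dG m xi <= W m) ->
  G (hybrid L z z') - G z <= lsum (fun m => W m * (z' m - z m)) L.
Proof.
  intros Hn Hzz. induction L as [|a L IH]; intros HW.
  - rewrite hybrid_nil. unfold lsum; simpl. lra.
  - inversion Hn; subst. rewrite hybrid_cons by assumption.
    destruct (mvt_coordinate G a (dG a) (HP a) (hybrid L z z') (z' a - z a))
      as [th [Hth Heq]]; [specialize (Hzz a); lra|].
    assert (Hxi : dG a (upd (hybrid L z z') a th) <= W a).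
    { apply HW; [left; auto | |]; intro q; unfold upd, hybrid; specialize (Hzz q);
        destruct (pt_eq_dec q a) as [->|]; destruct (in_dec pt_eq_dec _ L);
        try contradiction; lra. }
    pose proof (Rmult_le_compat_r (z' a - z a) _ _ ltac:(specialize (Hzz a); lra) Hxi).
    pose proof (IH H2 (fun m xi Hm => HW m xi (or_intror Hm))).
    unfold lsum in *; simpl. lra.
Qed.

Definition grid (x y : Config d) (N n : nat) : Config d :=
  fun q => x q + INR n * ((y q - x q) / INR N).

Lemma grid_step x y N n q : grid x y N (S n) q - grid x y N n q = (y q - x q) / INR N.
Proof. unfold grid. rewrite S_INR. ring. Qed.

Lemma mvt_grid (G : Config d -> R) (dG : Pt d -> Config d -> R)
  (HP : forall m, IsPartial G m (dG m)) (L : list (Pt d)) (x y : Config d) (N : nat)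
  (W : Pt d -> R) :
  NoDup L -> (forall z z', (forall m, In m L -> z m = z' m) -> G z = G z') ->
  cle x y -> (0 < N)%nat ->
  (forall n m xi, (n < N)%nat -> In m L ->
     cle (grid x y N n) xi -> cle xi (grid x y N (S n)) -> dG m xi <= W m) ->
  G y - G x <= lsum (fun m => W m * (y m - x m)) L.
Proof.
  intros Hn HL Hxy HN HW.
  assert (HNp : 0 < INR N) by (apply lt_0_INR; lia).
  set (incr := lsum (fun m => W m * ((y m - x m) / INR N)) L).
  assert (Htel : forall n, (n <= N)%nat -> G (grid x y N n) - G x <= INR n * incr).
  { induction n as [|n IH]; intro Hle.
    - replace (grid x y N 0) with x; [simpl; lra|].
      apply functional_extensionality; intro q. unfold grid. simpl. ring.
    - assert (Hup : cle (grid x y N n) (grid x y N (S n))).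
      { intro q. pose proof (grid_step x y N n q).
        pose proof (Rdiv_le_0_compat (y q - x q) (INR N) ltac:(specialize (Hxy q); lra) HNp).
        lra. }
      rewrite (HL _ (hybrid L (grid x y N n) (grid x y N (S n))))
        by (intros m Hm; unfold hybrid; destruct (in_dec _ m L); tauto).
      pose proof (mvt_hybrid G dG HP L _ _ W Hn Hup
                    (fun m xi Hm => HW n m xi ltac:(lia) Hm)) as Hstep.
      rewrite (lsum_ext _ (fun m => W m * ((y m - x m) / INR N))) in Hstep
        by (intros m _; rewrite grid_step; reflexivity).
      rewrite S_INR. specialize (IH ltac:(lia)). fold incr in Hstep. lra. }
  specialize (Htel N (le_n N)).
  replace (grid x y N N) with y in Htel
    by (apply functional_extensionality; intro q; unfold grid; field; lra).
  unfold incr in Htel. rewrite <- lsum_scal in Htel.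
  rewrite (lsum_ext _ (fun m => W m * (y m - x m))) in Htel by (intros m _; field; lra).
  exact Htel.
Qed.

Lemma grid_oscillation x y N n xi a b B :
  (n < N)%nat -> cle x y -> Rabs (x a - x b) <= B -> Rabs (y a - y b) <= B ->
  y a - x a <= INR N -> y b - x b <= INR N ->
  cle (grid x y N n) xi -> cle xi (grid x y N (S n)) -> Rabs (xi a - xi b) <= B + 1.
Proof.
  intros Hn Hxy Hxa Hya HNa HNb H1 H2.
  assert (HNp : 0 < INR N) by (apply lt_0_INR; lia).
  set (t := INR n / INR N).
  assert (Ht : 0 <= t <= 1).
  { apply lt_INR in Hn. unfold t. split; [apply Rdiv_le_0_compat; [apply pos_INR | lra]|].
    apply Rmult_le_reg_r with (INR N); [lra|]. unfold Rdiv. rewrite Rmult_assoc, Rinv_l; lra. }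
  assert (Hstep : forall q, y q - x q <= INR N -> 0 <= (y q - x q) / INR N <= 1).
  { intros q Hq. split; [apply Rdiv_le_0_compat; [specialize (Hxy q); lra | lra]|].
    apply Rmult_le_reg_r with (INR N); [lra|]. unfold Rdiv. rewrite Rmult_assoc, Rinv_l; lra. }
  assert (Hconv : Rabs (grid x y N n a - grid x y N n b) <= B).
  { replace (grid x y N n a - grid x y N n b) with ((1 - t) * (x a - x b) + t * (y a - y b))
      by (unfold grid, t; field; lra).
    apply convex_bound; assumption. }
  pose proof (H1 a). pose proof (H2 a). pose proof (H1 b). pose proof (H2 b).
  pose proof (grid_step x y N n a). pose proof (grid_step x y N n b).
  pose proof (Hstep a HNa). pose proof (Hstep b HNb).
  apply rabs_le_inv in Hconv. apply Rabs_le. lra.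
Qed.

End Calculus.

(** ** A compactness argument *)

Lemma inv_small (eps : R) : 0 < eps -> exists N : nat, / (INR N + 1) < eps.
Proof.
  intro He. destruct (archimed_cor1 eps He) as [N [HN HN0]]. exists N.
  apply lt_0_INR in HN0. apply Rle_lt_trans with (/ INR N); [|exact HN].
  apply Rinv_le_contravar; lra.
Qed.

Lemma inv_mono (n m : nat) : (n <= m)%nat -> / (INR m + 1) <= / (INR n + 1).
Proof. intro H. apply le_INR in H. pose proof (pos_INR n). apply Rinv_le_contravar; lra. Qed.

Definition strictly_increasing (phi : nat -> nat) : Prop := forall n, (phi n < phi (S n))%nat.

Lemma incr_ge (phi : nat -> nat) : strictly_increasing phi -> forall n, (n <= phi n)%nat.
Proof. intros H n; induction n; [lia|]. specialize (H n). lia. Qed.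

Lemma incr_mono (phi : nat -> nat) : strictly_increasing phi ->
  forall n m, (n <= m)%nat -> (phi n <= phi m)%nat.
Proof. intros H n m Hnm; induction Hnm; [lia|]. specialize (H m). lia. Qed.

Lemma incr_compose (phi psi : nat -> nat) :
  strictly_increasing phi -> strictly_increasing psi -> strictly_increasing (fun n => phi (psi n)).
Proof.
  intros Hp Hq n. specialize (Hq n). pose proof (incr_mono phi Hp (S (psi n)) (psi (S n)) Hq).
  specialize (Hp (psi n)). lia.
Qed.

Lemma subseq_cv (u : nat -> R) l (phi : nat -> nat) :
  strictly_increasing phi -> Un_cv u l -> Un_cv (fun n => u (phi n)) l.
Proof.
  intros Hp Hu eps He. destruct (Hu eps He) as [N HN]. exists N. intros n Hn.
  apply HN. pose proof (incr_ge phi Hp n). lia.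
Qed.

Lemma bolzano_weierstrass_seq (t : nat -> R) (M : R) : (forall n, Rabs (t n) <= M) ->
  exists (psi : nat -> nat) (l : R), strictly_increasing psi /\ Un_cv (fun n => t (psi n)) l.
Proof.
  intro Hb.
  destruct (Bolzano_Weierstrass t (fun c => -M <= c <= M) (compact_P3 (-M) M)) as [l Hl];
    [intro n; exact (rabs_le_inv _ _ (Hb n))|].
  assert (Hclus : forall (N n : nat), exists p, (N <= p)%nat /\ Rabs (t p - l) < / (INR n + 1)).
  { intros N n.
    assert (Hpos : 0 < / (INR n + 1)) by (apply Rinv_0_lt_compat; pose proof (pos_INR n); lra).
    destruct (Hl (fun c => Rabs (c - l) < / (INR n + 1)) N) as [p Hp];
      [exists (mkposreal _ Hpos); intros y Hy; exact Hy | exists p; exact Hp]. }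
  set (g := fun N n => proj1_sig (constructive_indefinite_description _ (Hclus N n))).
  assert (Hg : forall N n, (N <= g N n)%nat /\ Rabs (t (g N n) - l) < / (INR n + 1))
    by (intros N n; unfold g;
        destruct (constructive_indefinite_description _ _) as [p Hp]; exact Hp).
  set (psi := nat_rect (fun _ => nat) (g 0%nat 0%nat) (fun n p => g (S p) (S n))).
  assert (Hps : forall n, Rabs (t (psi n) - l) < / (INR n + 1)) by (intro n; destruct n; apply Hg).
  exists psi, l. split.
  - intro n. simpl. pose proof (proj1 (Hg (S (psi n)) (S n))). lia.
  - intros eps He. destruct (inv_small eps He) as [N HN]. exists N. intros n Hn.
    unfold R_dist. specialize (Hps n). apply Rabs_def2 in Hps.
    apply Rabs_def1; pose proof (inv_mono N n Hn); lra.
Qed.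

Lemma bolzano_weierstrass_sites {d} (L : list (Pt d)) (M : R) (z : nat -> Config d) :
  (forall n m, In m L -> Rabs (z n m) <= M) ->
  exists (phi : nat -> nat) (zs : Config d), strictly_increasing phi /\
    forall m, In m L -> Un_cv (fun n => z (phi n) m) (zs m).
Proof.
  induction L as [|a L IH]; intro Hb.
  - exists (fun n => n), (fun _ => 0). split; [intro; lia | intros m []].
  - destruct (IH (fun n m Hm => Hb n m (or_intror Hm))) as [phi [zs [Hp Hc]]].
    destruct (bolzano_weierstrass_seq (fun n => z (phi n) a) M) as [psi [l [Hq Hl]]];
      [intro n; apply Hb; left; auto|].
    exists (fun n => phi (psi n)), (fun q => if pt_eq_dec q a then l else zs q).
    split; [apply incr_compose; assumption|].
    intros m Hm. destruct (pt_eq_dec m a) as [->|Hne]; [exact Hl|].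
    destruct Hm as [->|Hm]; [congruence|].
    apply (subseq_cv (fun n => z (phi n) m) (zs m) psi Hq (Hc m Hm)).
Qed.

Lemma cv_sites {d} (L : list (Pt d)) (u : nat -> Config d) (zs : Config d) :
  (forall m, In m L -> Un_cv (fun n => u n m) (zs m)) ->
  forall del, 0 < del ->
  exists N, forall n, (N <= n)%nat -> forall m, In m L -> Rabs (u n m - zs m) < del.
Proof.
  intros H del Hd. induction L as [|a L IH]; [exists 0%nat; intros n _ m []|].
  destruct (IH (fun m Hm => H m (or_intror Hm))) as [N1 HN1].
  destruct (H a (or_introl eq_refl) del Hd) as [N2 HN2].
  exists (Nat.max N1 N2). intros n Hn m [<-|Hm]; [apply HN2 | apply HN1]; auto; lia.
Qed.

Lemma negative_bounded_away {d} (L : list (Pt d)) (M : R) (F : Config d -> R) :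
  (forall x eps, 0 < eps -> exists del, 0 < del /\
     forall y, (forall k, In k L -> Rabs (y k - x k) < del) -> Rabs (F y - F x) < eps) ->
  (forall z, F z < 0) ->
  exists c, 0 < c /\ forall z, (forall m, In m L -> Rabs (z m) <= M) -> F z <= - c.
Proof.
  intros Hc Hneg. apply NNPP. intro Hno.
  (* Otherwise there are bounded configurations with [F > -1/(n+1)] ... *)
  assert (H : forall n : nat, exists z,
             (forall m, In m L -> Rabs (z m) <= M) /\ - / (INR n + 1) < F z).
  { intro n. apply NNPP. intro Hn. apply Hno. exists (/ (INR n + 1)). split.
    - apply Rinv_0_lt_compat. pose proof (pos_INR n). lra.
    - intros z Hz. apply Rnot_lt_le. intro Hlt. apply Hn. exists z. auto. }
  set (zq := fun n => proj1_sig (constructive_indefinite_description _ (H n))).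
  assert (Hzq : forall n, (forall m, In m L -> Rabs (zq n m) <= M) /\ - / (INR n + 1) < F (zq n))
    by (intro n; unfold zq; destruct (constructive_indefinite_description _ _) as [p Hp]; exact Hp).
  (* ... and a limit point [zs] of them would have [F zs >= 0]. *)
  destruct (bolzano_weierstrass_sites L M zq (fun n m Hm => proj1 (Hzq n) m Hm))
    as [phi [zs [Hp Hcv]]].
  pose proof (Hneg zs) as Hzs.
  destruct (Hc zs (- F zs / 2) ltac:(lra)) as [del [Hd Hdel]].
  destruct (cv_sites L (fun n => zq (phi n)) zs Hcv del Hd) as [N1 HN1].
  destruct (inv_small (- F zs / 2) ltac:(lra)) as [N2 HN2].
  set (n := Nat.max N1 N2).
  specialize (Hdel (zq (phi n)) (HN1 n ltac:(lia))).
  pose proof (proj2 (Hzq (phi n))).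
  pose proof (inv_mono N2 (phi n) ltac:(pose proof (incr_ge phi Hp n); lia)).
  apply Rabs_def2 in Hdel. lra.
Qed.

Lemma common_positive_bound {A} (P : A -> R -> Prop) (L : list A) :
  (forall a c c', P a c -> 0 < c' <= c -> P a c') ->
  (forall a, In a L -> exists c, 0 < c /\ P a c) ->
  exists c, 0 < c /\ forall a, In a L -> P a c.
Proof.
  intros Hm H. induction L as [|a L IH]; [exists 1; split; [lra | intros a []]|].
  destruct (H a (or_introl eq_refl)) as [c1 [Hc1 HP1]].
  destruct (IH (fun b Hb => H b (or_intror Hb))) as [c2 [Hc2 HP2]].
  exists (Rmin c1 c2). split; [apply Rmin_glb_lt; lra|].
  pose proof (Rmin_l c1 c2). pose proof (Rmin_r c1 c2).
  intros b [->|Hb]; [apply (Hm b c1) | apply (Hm b c2)]; auto; split; try apply Rmin_glb_lt; lra.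
Qed.

Lemma nat_upper_bound {A} (f : A -> R) (L : list A) :
  exists N : nat, (1 <= N)%nat /\ forall a, In a L -> f a <= INR N.
Proof.
  induction L as [|a L IH]; [exists 1%nat; split; [lia | intros a []]|].
  destruct IH as [N1 [HN1 H1]]. destruct (archimed (f a)) as [Ha _].
  exists (Nat.max N1 (Z.to_nat (up (f a)))). split; [lia|]. intros b [->|Hb].
  - apply Rle_trans with (INR (Z.to_nat (up (f b)))); [|apply le_INR; lia].
    destruct (Z_lt_le_dec (up (f b)) 0) as [Hneg|Hpos].
    + replace (Z.to_nat (up (f b))) with 0%nat by lia. simpl. apply IZR_lt in Hneg. lra.
    + rewrite INR_IZR_INZ, Z2Nat.id by lia. lra.
  - apply Rle_trans with (INR N1); [auto | apply le_INR; lia].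
Qed.

(** ** Birkhoff configurations with a rotation vector *)

Lemma inv_INR_S_cv0 : Un_cv (fun n => / INR (S n)) 0.
Proof.
  intros eps He. destruct (inv_small eps He) as [N HN]. exists N. intros n Hn.
  unfold R_dist. rewrite Rminus_0_r, S_INR, Rabs_right.
  - pose proof (inv_mono N n Hn). lra.
  - left. apply Rinv_0_lt_compat. pose proof (pos_INR n). lra.
Qed.

Lemma cv_affine_inv (c A : R) : Un_cv (fun n => c * / INR (S n) + A) A.
Proof.
  assert (Hconst : forall a, Un_cv (fun _ => a) a)
    by (intros a eps He; exists 0%nat; intros n _; rewrite R_dist_eq; exact He).
  pose proof (CV_plus _ _ _ _ (CV_mult _ _ _ _ (Hconst c) inv_INR_S_cv0) (Hconst A)) as H.
  rewrite Rmult_0_r, Rplus_0_l in H. exact H.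
Qed.

Lemma slope_upper (u : nat -> R) L c A : Un_cv (fun n => u n / INR n) L ->
  (forall n, u n <= c + INR n * A) -> L <= A.
Proof.
  intros Hcv Hu.
  apply Rle_cv_lim with (Un := fun n => u (S n) / INR (S n)) (Vn := fun n => c * / INR (S n) + A).
  - intro n. pose proof (lt_0_INR (S n) ltac:(lia)).
    apply Rmult_le_reg_r with (INR (S n)); [lra|].
    unfold Rdiv. rewrite Rmult_plus_distr_r, !Rmult_assoc, Rinv_l by lra.
    specialize (Hu (S n)). lra.
  - exact (subseq_cv _ L S (fun n => Nat.lt_succ_diag_r (S n)) Hcv).
  - apply cv_affine_inv.
Qed.

Lemma slope_lower (u : nat -> R) L c A : Un_cv (fun n => u n / INR n) L ->
  (forall n, c + INR n * A <= u n) -> A <= L.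
Proof.
  intros Hcv Hu.
  apply Rle_cv_lim with (Un := fun n => c * / INR (S n) + A) (Vn := fun n => u (S n) / INR (S n)).
  - intro n. pose proof (lt_0_INR (S n) ltac:(lia)).
    apply Rmult_le_reg_r with (INR (S n)); [lra|].
    unfold Rdiv. rewrite Rmult_plus_distr_r, !Rmult_assoc, Rinv_l by lra.
    specialize (Hu (S n)). lra.
  - apply cv_affine_inv.
  - exact (subseq_cv _ L S (fun n => Nat.lt_succ_diag_r (S n)) Hcv).
Qed.

Lemma birkhoff_increments {d} (x : Config d) : Birkhoff x -> forall m q q',
  (x (padd q m) - x q) - (x (padd q' m) - x q') <= 1.
Proof.
  intros HB m q q'. apply Rnot_lt_le. intro Hc.
  set (l := up (- (x (padd q m) - x q))).
  destruct (archimed (- (x (padd q m) - x q))) as [H1 H2]. fold l in H1, H2.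
  destruct (HB m l) as [H|H]; [specialize (H q') | specialize (H q)]; unfold tau in H; lra.
Qed.

Lemma birkhoff_rotation {d} (x : Config d) w : Birkhoff x -> RotationVector x w ->
  forall q m, Rabs (x (padd q m) - x q - dotRZ w m) <= 1.
Proof.
  intros HB HR q m. set (a := x (padd q m) - x q).
  assert (Hs : forall n, INR n * (a - 1) <= x (pscale n m) - x (pscale 0 m) <= INR n * (a + 1)).
  { induction n; [simpl; lra|]. rewrite pscale_S, S_INR.
    pose proof (birkhoff_increments x HB m q (pscale n m)).
    pose proof (birkhoff_increments x HB m (pscale n m) q).
    unfold a in *. lra. }
  assert (dotRZ w m <= a + 1)
    by (apply (slope_upper (fun n => x (pscale n m)) _ (x (pscale 0 m))); [apply HR|];
        intro n; specialize (Hs n); lra).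
  assert (a - 1 <= dotRZ w m)
    by (apply (slope_lower (fun n => x (pscale n m)) _ (x (pscale 0 m))); [apply HR|];
        intro n; specialize (Hs n); lra).
  apply Rabs_le. fold a. lra.
Qed.

Definition maxnorm {n} (w : Vector.t R n) : R :=
  Vector.fold_right (fun a s => Rmax (Rabs a) s) w 0.

Lemma maxnorm_cons {n} a (w : Vector.t R n) :
  maxnorm (Vector.cons R a n w) = Rmax (Rabs a) (maxnorm w).
Proof. reflexivity. Qed.

Lemma maxnorm_nonneg {n} (w : Vector.t R n) : 0 <= maxnorm w.
Proof.
  induction w; [cbn; lra|]. rewrite maxnorm_cons. pose proof (Rmax_r (Rabs h) (maxnorm w)). lra.
Qed.

Lemma maxnorm_lt_close {n} (v w : Vector.t R n) e : 0 < e ->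
  (forall m : Fin.t n, Rabs (Vector.nth v m - Vector.nth w m) < e) -> maxnorm v < maxnorm w + e.
Proof.
  intro He. revert w; induction v as [|a n v IH]; intros w Hm.
  - rewrite (Vector.case0 (fun w => w = Vector.nil R) eq_refl w). cbn. lra.
  - rewrite (Vector.eta w) in *. rewrite !maxnorm_cons.
    pose proof (Hm Fin.F1) as H1. simpl in H1.
    assert (IHv : maxnorm v < maxnorm (Vector.tl w) + e)
      by (apply IH; intro p; exact (Hm (Fin.FS p))).
    pose proof (Rabs_triang (a - Vector.hd w) (Vector.hd w)) as Ht.
    replace (a - Vector.hd w + Vector.hd w) with a in Ht by ring.
    pose proof (Rmax_l (Rabs (Vector.hd w)) (maxnorm (Vector.tl w))).
    pose proof (Rmax_r (Rabs (Vector.hd w)) (maxnorm (Vector.tl w))).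
    apply Rmax_lub_lt; lra.
Qed.

(** Compact sets are bounded: cover [K] by the open sets [{|w| < n}]. *)
Lemma compact_bounded {d} (K : Vector.t R d -> Prop) : CompactRd K ->
  exists B, 0 <= B /\ forall w, K w -> maxnorm w <= B.
Proof.
  intro HK. destruct (HK nat (fun n w => maxnorm w < INR n)) as [F HF].
  - intros n w Hw. exists (INR n - maxnorm w). split; [lra|].
    intros v Hv. pose proof (maxnorm_lt_close v w (INR n - maxnorm w) ltac:(lra) Hv). lra.
  - intros w _. destruct (archimed (maxnorm w)) as [H1 _]. pose proof (maxnorm_nonneg w).
    exists (Z.to_nat (up (maxnorm w))). rewrite INR_IZR_INZ, Z2Nat.id; [lra|].
    apply le_IZR. lra.
  - destruct (nat_upper_bound INR F) as [N [_ HN]]. exists (INR N). split; [apply pos_INR|].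
    intros w Hw. destruct (HF w Hw) as [a [Ha Hlt]]. specialize (HN a Ha). lra.
Qed.

Lemma dotRZ_bound {d} (w : Vector.t R d) (u : Pt d) :
  Rabs (dotRZ w u) <= maxnorm w * IZR (norm1 u).
Proof.
  revert w; induction u as [|b n u IH]; intro w.
  - rewrite (Vector.case0 (fun w => w = Vector.nil R) eq_refl w). cbn. rewrite Rabs_R0. lra.
  - rewrite (Vector.eta w). unfold dotRZ in *. simpl. rewrite maxnorm_cons, norm1_cons, plus_IZR.
    specialize (IH (Vector.tl w)).
    pose proof (Rabs_triang (Vector.hd w * IZR b)
       (Vector.fold_right (fun a s => a + s)
          (Vector.map2 (fun a b => a * IZR b) (Vector.tl w) u) 0)) as H.
    rewrite Rabs_mult, <- abs_IZR in H.
    pose proof (Rmax_l (Rabs (Vector.hd w)) (maxnorm (Vector.tl w))).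
    pose proof (Rmax_r (Rabs (Vector.hd w)) (maxnorm (Vector.tl w))).
    set (mx := Rmax (Rabs (Vector.hd w)) (maxnorm (Vector.tl w))) in *.
    pose proof (norm1_nonneg u) as Hu. apply IZR_le in Hu.
    assert (0 <= IZR (Z.abs b)) by (apply IZR_le; lia).
    pose proof (Rabs_pos (Vector.hd w)). pose proof (maxnorm_nonneg (Vector.tl w)).
    assert (Rabs (Vector.hd w) * IZR (Z.abs b) <= mx * IZR (Z.abs b))
      by (apply Rmult_le_compat_r; lra).
    assert (maxnorm (Vector.tl w) * IZR (norm1 u) <= mx * IZR (norm1 u))
      by (apply Rmult_le_compat_r; lra).
    lra.
Qed.

Lemma birkhoff_oscillation {d} (r : R) (x : Config d) w B :
  Birkhoff x -> RotationVector x w -> maxnorm w <= B -> 0 <= B ->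
  forall i m, inBall r i m -> Rabs (x m - x i) <= 1 + B * r.
Proof.
  intros Hb Hr HB HB0 i m Hm. pose proof (birkhoff_rotation x w Hb Hr i (psub m i)) as H.
  rewrite padd_psub_l in H. pose proof (dotRZ_bound w (psub m i)) as H2.
  pose proof (norm1_nonneg (psub m i)) as Hn. apply IZR_le in Hn. unfold inBall in Hm.
  pose proof (maxnorm_nonneg w).
  assert (maxnorm w * IZR (norm1 (psub m i)) <= B * r).
  { apply Rle_trans with (B * IZR (norm1 (psub m i))); [apply Rmult_le_compat_r; lra|].
    apply Rmult_le_compat_l; lra. }
  apply rabs_le_inv in H, H2. apply Rabs_le. lra.
Qed.

Lemma inBall_mono {d} (r r' : R) (i j : Pt d) : r <= r' -> inBall r i j -> inBall r' i j.
Proof. unfold inBall. lra. Qed.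

Lemma chain_estimate {d} (x y : Config d) (D : R) : 0 < D -> cle x y ->
  (forall i k, norm1 (psub i k) = 1%Z -> y k - x k <= D * (y i - x i)) ->
  forall i k, y k - x k <= D ^ Z.to_nat (norm1 (psub i k)) * (y i - x i).
Proof.
  intros HD Hxy Hnb.
  assert (Hpath : forall n i k, norm1 (psub i k) = Z.of_nat n ->
                    y k - x k <= D ^ n * (y i - x i)).
  { induction n as [|n IH]; intros i k Hn.
    - apply norm1_zero_eq in Hn. subst. simpl. lra.
    - destruct (norm1_step i k n Hn) as [i' [H1 H2]].
      specialize (IH i' k H2). specialize (Hnb i i' H1). pose proof (pow_lt D n HD).
      apply Rle_trans with (D ^ n * (y i' - x i')); [exact IH|]. simpl.
      replace (D * D ^ n * (y i - x i)) with (D ^ n * (D * (y i - x i))) by ring.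
      apply Rmult_le_compat_l; lra. }
  intros i k. apply Hpath. rewrite Z2Nat.id; [reflexivity | apply norm1_nonneg].
Qed.

Lemma strictly_below {d} (x y : Config d) (delta : nat -> R) : clt x y ->
  (forall i k, y k - x k <= delta (Z.to_nat (norm1 (psub i k))) * (y i - x i)) -> cll x y.
Proof.
  intros [Hxy Hne] Hest i. destruct (Rlt_dec (x i) (y i)) as [H|H]; [exact H|].
  exfalso. apply Hne. apply functional_extensionality. intro k.
  specialize (Hest i k). pose proof (Hxy i). pose proof (Hxy k).
  replace (y i - x i) with 0 in Hest by lra. rewrite Rmult_0_r in Hest. lra.
Qed.

(** ** Local potentials *)

Section Potentials.
Context {d : nat} (r : R) (S : Pt d -> Config d -> R)
  (dS : Pt d -> Pt d -> Config d -> R) (ddS : Pt d -> Pt d -> Pt d -> Config d -> R).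
Hypothesis HS : LocalPotentials r S dS ddS.

Lemma radius_pos : 0 < r.
Proof. apply HS. Qed.
Lemma S_local j : LocalTo r j (S j).
Proof. apply HS. Qed.
Lemma dS_partial j i : IsPartial (S j) i (dS j i).
Proof. apply HS. Qed.
Lemma ddS_partial j i k : IsPartial (dS j i) k (ddS j i k).
Proof. apply HS. Qed.
Lemma ddS_continuous j i k : ContLocal r j (ddS j i k).
Proof. apply HS. Qed.
Lemma S_translate j k l x : S j (tau k l x) = S (padd j k) x.
Proof. apply HS. Qed.
Lemma ddS_offdiag j i k x : i <> k -> ddS j i k x <= 0.
Proof. apply HS. Qed.
Lemma ddS_neighbour i k x : norm1 (psub i k) = 1%Z -> ddS i i k x < 0.
Proof. apply HS. Qed.
Lemma ddS_bounded : exists C, forall j i k x, Rabs (ddS j i k x) <= C.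
Proof. apply HS. Qed.

Lemma ddS_translate i k l x : ddS i i k x = ddS origin origin (psub k i) (tau i l x).
Proof.
  assert (F1 : forall x, S i x = S origin (tau i l x))
    by (intro z; rewrite S_translate, padd_origin_l; reflexivity).
  assert (F2 : forall x, dS i i x = dS origin origin (tau i l x)).
  { intro z. pose proof (partial_tau (S i) (S origin) i l i (dS i i) (dS origin (psub i i))
                           F1 (dS_partial _ _) (dS_partial _ _) z) as H.
    rewrite psub_diag in H. exact H. }
  exact (partial_tau (dS i i) (dS origin origin) i l k (ddS i i k) (ddS origin origin (psub k i))
           F2 (ddS_partial _ _ _) (ddS_partial _ _ _) x).
Qed.

Lemma uniform_negativity_origin (M : R) : exists c, 0 < c /\
  forall e, norm1 (psub origin e) = 1%Z ->
  forall z, (forall m, inBall r origin m -> Rabs (z m) <= M) -> ddS origin origin e z <= - c.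
Proof.
  destruct (common_positive_bound (fun e c => norm1 (psub origin e) = 1%Z ->
      forall z, (forall m, inBall r origin m -> Rabs (z m) <= M) -> ddS origin origin e z <= - c)
     (ball_enum 1 origin)) as [c [Hc HP]].
  - intros e c c' H Hc' He z Hz. specialize (H He z Hz). lra.
  - intros e _. destruct (Z.eq_dec (norm1 (psub origin e)) 1) as [He|He];
      [|exists 1; split; [lra | intro; contradiction]].
    destruct (negative_bounded_away (ball_enum r origin) M (ddS origin origin e)) as [c [Hc HP]].
    + intros x eps Heps. destruct (ddS_continuous origin origin e x eps Heps) as [del [Hd Hdel]].
      exists del. split; auto. intros y Hy. apply Hdel. intros k Hk. apply Hy, ball_enum_spec, Hk.
    + intro z. apply ddS_neighbour. exact He.
    + exists c. split; auto. intros _ z Hz. apply HP. intros m Hm. apply Hz, ball_enum_spec, Hm.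
  - exists c. split; auto. intros e He. apply HP; auto. apply ball_enum_spec. unfold inBall.
    rewrite norm1_sym, He. lra.
Qed.

(** (D) holds uniformly on configurations of oscillation at most [B] on the
    ball: translate the site to the origin and the value into [(0,1]]. *)
Lemma uniform_negativity (B : R) : exists c, 0 < c /\
  forall i k xi, norm1 (psub i k) = 1%Z ->
  (forall m, inBall r i m -> Rabs (xi m - xi i) <= B) -> ddS i i k xi <= - c.
Proof.
  destruct (uniform_negativity_origin (B + 1)) as [c [Hc HP]]. exists c. split; auto.
  intros i k xi Hik Hxi. set (l := (1 - up (xi i))%Z).
  rewrite (ddS_translate i k l). apply HP; [rewrite psub_origin_psub; exact Hik|].
  intros m Hm. unfold tau. destruct (archimed (xi i)) as [H1 H2].
  assert (Hb : inBall r i (padd m i))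
    by (unfold inBall in *; rewrite psub_padd_r; rewrite psub_origin_r in Hm; exact Hm).
  specialize (Hxi _ Hb). apply rabs_le_inv in Hxi. apply Rabs_le.
  unfold l. rewrite minus_IZR. lra.
Qed.

(** Upper bounds for the mixed derivatives [d_{i,m} S_j] in the neighbour
    estimate for the pair [i, k]: [C] on the diagonal, [-c] for [j = i, m = k],
    [0] elsewhere. *)
Definition weight (C c : R) (i k j m : Pt d) : R :=
  (if pt_eq_dec m i then C else 0) +
  (if pt_eq_dec j i then (if pt_eq_dec m k then - c else 0) else 0).

Lemma weight_sum C c i k j (L : list (Pt d)) (u : Pt d -> R) :
  NoDup L -> In i L -> In k L -> k <> i ->
  lsum (fun m => weight C c i k j m * u m) L =
  C * u i + (if pt_eq_dec j i then - c * u k else 0).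
Proof.
  intros Hn Hi Hk Hki.
  rewrite (lsum_ext _ (fun m => (if pt_eq_dec m i then C * u i else 0) +
        (if pt_eq_dec m k then (if pt_eq_dec j i then - c * u k else 0) else 0))).
  - rewrite lsum_plus, !lsum_indicator; auto.
  - intros m _. unfold weight.
    destruct (pt_eq_dec m i) as [Emi|]; destruct (pt_eq_dec m k) as [Emk|];
      destruct (pt_eq_dec j i); try (exfalso; apply Hki; congruence); subst; ring.
Qed.

Lemma ddS_weight C c i k j m xi :
  (forall j i k x, Rabs (ddS j i k x) <= C) -> k <> i -> ddS i i k xi <= - c ->
  ddS j i m xi <= weight C c i k j m.
Proof.
  intros HC Hki Hneg. unfold weight. destruct (pt_eq_dec m i) as [->|Hmi].
  - pose proof (rabs_le_inv _ _ (HC j i i xi)).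
    destruct (pt_eq_dec j i); [destruct (pt_eq_dec i k); [congruence|]|]; lra.
  - pose proof (ddS_offdiag j i m xi (not_eq_sym Hmi)).
    destruct (pt_eq_dec j i) as [->|]; [destruct (pt_eq_dec m k) as [->|]|]; lra.
Qed.

Section Neighbours.
Variables (C c B : R).
Hypothesis HC : forall j i k x, Rabs (ddS j i k x) <= C.
Hypothesis Hneg : forall i k xi, norm1 (psub i k) = 1%Z ->
  (forall m, inBall r i m -> Rabs (xi m - xi i) <= B + 1) -> ddS i i k xi <= - c.
Variables (x y : Config d).
Hypothesis Hxy : cle x y.
Hypothesis Hosc : forall i m, inBall r i m -> Rabs (x m - x i) <= B /\ Rabs (y m - y i) <= B.

(** The increment of [d_i S_j] from [x] to [y], for [j] in [B_i^r]: the mean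
    value theorem along a subdivided segment, fine enough to keep the
    oscillation below [B + 1] so that [Hneg] applies. *)
Lemma increment_estimate i k j : norm1 (psub i k) = 1%Z -> inBall r i j ->
  dS j i y - dS j i x <= C * (y i - x i) + (if pt_eq_dec j i then - c * (y k - x k) else 0).
Proof.
  intros Hik Hj. pose proof radius_pos as Hr.
  assert (Hki : k <> i) by (intro; subst; rewrite norm1_diag in Hik; discriminate).
  set (Lm := ball_enum (2 * r + 1) i).
  assert (HbLm : forall m, inBall r i m -> In m Lm)
    by (intros m Hm; apply ball_enum_spec, (inBall_mono r); [lra | exact Hm]).
  assert (HiLm : In i Lm) by (apply HbLm; unfold inBall; rewrite norm1_diag; lra).
  assert (HkLm : In k Lm)
    by (apply ball_enum_spec; unfold inBall; rewrite norm1_sym, Hik; lra).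
  destruct (nat_upper_bound (fun m => y m - x m) Lm) as [N [HN1 HN]].
  rewrite <- (weight_sum C c i k j Lm (fun m => y m - x m)) by (auto; apply ball_enum_nodup).
  apply (mvt_grid (dS j i) (ddS j i) (ddS_partial j i) Lm x y N); auto;
    [apply ball_enum_nodup | |].
  - intros z z' Hzz. apply (partial_local r j (S j) i (dS j i) (S_local j) (dS_partial j i)).
    intros q Hq. apply Hzz, ball_enum_spec, (inBall_compose r i j q); assumption.
  - intros n m xi Hn _ H1 H2. apply ddS_weight; auto. apply Hneg; auto.
    intros m' Hm'. destruct (Hosc i m' Hm').
    apply (grid_oscillation x y N n); auto; apply HN; auto.
Qed.

(** Neighbour estimate: subtract the stationarity equations at [i]. *)
Lemma neighbour_estimate i k : Stationary r dS x -> Stationary r dS y ->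
  norm1 (psub i k) = 1%Z ->
  c * (y k - x k) <= INR (length (ball_enum r i)) * C * (y i - x i).
Proof.
  intros Hx Hy Hik. set (Lb := ball_enum r i).
  assert (Hsum : lsum (fun j => dS j i y - dS j i x) Lb <=
           lsum (fun j => C * (y i - x i) + (if pt_eq_dec j i then - c * (y k - x k) else 0)) Lb)
    by (apply lsum_le; intros j Hj; apply increment_estimate, ball_enum_spec; auto).
  rewrite lsum_minus, lsum_plus, lsum_const, lsum_indicator in Hsum;
    [| apply ball_enum_nodup | apply ball_enum_spec; unfold inBall; rewrite norm1_diag;
                               pose proof radius_pos; lra].
  assert (Hsx : lsum (fun j => dS j i x) Lb = 0)
    by (apply Hx; [apply ball_enum_nodup | intro; apply ball_enum_spec]).
  assert (Hsy : lsum (fun j => dS j i y) Lb = 0)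
    by (apply Hy; [apply ball_enum_nodup | intro; apply ball_enum_spec]).
  lra.
Qed.

End Neighbours.

Lemma neighbour_ratio (K : Vector.t R d -> Prop) : CompactRd K ->
  exists D, 0 < D /\ forall x y : Config d,
    Birkhoff x -> Birkhoff y ->
    (exists w, K w /\ RotationVector x w) -> (exists w, K w /\ RotationVector y w) ->
    Stationary r dS x -> Stationary r dS y -> cle x y ->
    forall i k, norm1 (psub i k) = 1%Z -> y k - x k <= D * (y i - x i).
Proof.
  intro HK. destruct ddS_bounded as [C HC].
  destruct (compact_bounded K HK) as [B [HB0 HBK]].
  set (Bosc := 1 + B * r).
  destruct (uniform_negativity (Bosc + 1)) as [c [Hc Hneg]].
  set (A := INR (length (ball_enum r (@origin d)))).
  assert (HCA : 0 <= A * C).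
  { apply Rmult_le_pos; [apply pos_INR|].
    pose proof (Rabs_pos (ddS origin origin origin (fun _ => 0))).
    pose proof (HC origin origin origin (fun _ => 0)). lra. }
  exists ((A * C + 1) / c). split; [apply Rdiv_lt_0_compat; lra|].
  intros x y Bx By [wx [Kx Rx]] [wy [Ky Ry]] Sx Sy Hxy i k Hik.
  assert (Hosc : forall i m, inBall r i m -> Rabs (x m - x i) <= Bosc /\ Rabs (y m - y i) <= Bosc)
    by (intros i' m Hm; split;
        [apply (birkhoff_oscillation r x wx B) | apply (birkhoff_oscillation r y wy B)]; auto).
  pose proof (neighbour_estimate C c Bosc HC Hneg x y Hxy Hosc i k Sx Sy Hik) as Hnb.
  rewrite (ball_enum_length r i origin) in Hnb. fold A in Hnb. pose proof (Hxy i).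
  apply Rmult_le_reg_l with c; [lra|].
  replace (c * ((A * C + 1) / c * (y i - x i))) with ((A * C + 1) * (y i - x i)) by (field; lra).
  lra.
Qed.

End Potentials.

Theorem mainTheorem8 (d : nat) (r : R) (S : Pt d -> Config d -> R)
    (dS : Pt d -> Pt d -> Config d -> R) (ddS : Pt d -> Pt d -> Pt d -> Config d -> R)
    (HS : LocalPotentials r S dS ddS)
    (K : Vector.t R d -> Prop) (HK : CompactRd K) :
  exists delta : nat -> R, (forall n, 0 < delta n) /\
    forall x y : Config d,
      Birkhoff x -> Birkhoff y ->
      (exists w, K w /\ RotationVector x w) ->
      (exists w, K w /\ RotationVector y w) ->
      Stationary r dS x -> Stationary r dS y ->
      clt x y ->
      (forall i k : Pt d,
         y k - x k <= delta (Z.to_nat (norm1 (psub i k))) * (y i - x i)) /\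
      cll x y.
Proof.
  destruct (neighbour_ratio r S dS ddS HS K HK) as [D [HD Hratio]].
  exists (fun n => D ^ n). split; [intro n; apply pow_lt, HD|].
  intros x y Bx By Rx Ry Sx Sy Hlt.
  assert (Hest : forall i k, y k - x k <= D ^ Z.to_nat (norm1 (psub i k)) * (y i - x i))
    by (apply chain_estimate; [exact HD | apply Hlt | apply Hratio; auto; apply Hlt]).
  split; [exact Hest | exact (strictly_below x y _ Hlt Hest)].
Qed.
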